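(* Let $T=(V,E)$ be a tree with $\mathrm{pthin}(T)=2$, and let $\sigma$ be an ordering of $V$ and $S=\{V^0,V^1\}$ a partition of $V$ that are strongly consistent. Let $v_1,v_2,v_3,v_4$ be vertices forming a path $v_1v_2v_3v_4$ (with $v_1v_2,v_2v_3,v_3v_4\in E$) whose classes alternate, i.e. $v_1,v_3$ lie in one class and $v_2,v_4$ in the other. Then it is not the case that $v_1<v_3$ and $v_4<v_2$, and it is not the case that $v_3<v_1$ and $v_2<v_4$.
   Context: For a graph $G=(V,E)$, a linear ordering $<$ of $V$ and a partition of $V$ into classes are called strongly consistent if for every triple $r<s<t$ of vertices with $rt\in E$: if $r$ and $s$ belong to the same class then $st\in E$, and if $s$ and $t$ belong to the same class then $rs\in E$. The proper thinness $\mathrm{pthin}(G)$ is the minimum $k$ such that some ordering and some partition into $k$ classes are strongly consistent. *)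

From mathcomp Require Import all_boot.
Set Implicit Arguments. Unset Strict Implicit. Unset Printing Implicit Defensive.

Definition simple_graph (T : finType) (e : rel T) : Prop :=
  symmetric e /\ irreflexive e.

Definition is_cycle (T : finType) (e : rel T) (x : T) (p : seq T) : bool :=
  [&& path e x p, uniq (x :: p), e (last x p) x & 2 <= size p].

Definition is_tree (T : finType) (e : rel T) : Prop :=
  [/\ simple_graph e, 0 < #|T|,
      (forall x y : T, connect e x y) &
      (forall (x : T) (p : seq T), ~~ is_cycle e x p)].

(* A linear ordering of V is given by an injective position map pos : T -> nat,
   with x < y iff pos x < pos y.  A partition into k classes is a map
   cls : T -> 'I_k (class of each vertex). *)
Definition strongly_consistent (T : finType) (e : rel T) (pos : T -> nat)
  (k : nat) (cls : T -> 'I_k) : Prop :=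
  forall r s t : T, pos r < pos s -> pos s < pos t -> e r t ->
    (cls r = cls s -> e s t) /\ (cls s = cls t -> e r s).

Definition pthin_le (T : finType) (e : rel T) (k : nat) : Prop :=
  exists (pos : T -> nat) (cls : T -> 'I_k),
    injective pos /\ strongly_consistent e pos cls.

Definition pthin_eq (T : finType) (e : rel T) (k : nat) : Prop :=
  pthin_le e k /\ forall k', pthin_le e k' -> k <= k'.

From mathcomp Require Import all_boot.

Set Implicit Arguments. Unset Strict Implicit. Unset Printing Implicit Defensive.

(* If the classes of the path v1 v2 v3 v4 alternate and the order crosses it
   (v1 < v3 and v4 < v2), then wherever v4 lies relative to v1, one of the
   edges v1v2 or v3v4 spans a vertex of its far endpoint's class, so strong
   consistency forces the chord v1v4.  In a tree that chord would close a
   4-cycle.  The mirrored configuration is the same argument for the reversed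
   order, which is again strongly consistent. *)

Section ConsistentOrder.

Variables (T : finType) (e : rel T) (k : nat) (cls : T -> 'I_k).

Definition consistent_order (lt : rel T) : Prop :=
  forall r s t : T, lt r s -> lt s t -> e r t ->
    (cls r = cls s -> e s t) /\ (cls s = cls t -> e r s).

Lemma strongly_consistentE (pos : T -> nat) :
  strongly_consistent e pos cls = consistent_order (fun x y => pos x < pos y).
Proof. by []. Qed.

Lemma consistent_order_converse (lt : rel T) :
  symmetric e -> consistent_order lt -> consistent_order (fun x y => lt y x).
Proof.
move=> e_sym lt_cons r s t lt_sr lt_ts e_rt.
have [ts_st sr_rs] := lt_cons t s r lt_ts lt_sr (etrans (esym (e_sym r t)) e_rt).
by split=> [/esym /sr_rs | /esym /ts_st]; rewrite e_sym.
Qed.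

Lemma alternating_crossing_chord (lt : rel T) (v1 v2 v3 v4 : T) :
  symmetric e -> consistent_order lt ->
  (forall x y, x != y -> lt x y || lt y x) ->
  e v1 v2 -> e v3 v4 -> cls v1 = cls v3 -> cls v2 = cls v4 -> v1 != v4 ->
  lt v1 v3 -> lt v4 v2 -> e v1 v4.
Proof.
move=> e_sym lt_cons lt_total e12 e34 c13 c24 n14 lt13 lt42.
case/orP: (lt_total _ _ n14) => [lt14 | lt41].
- by have [_ /(_ (esym c24))] := lt_cons _ _ _ lt14 lt42 e12.
- have [_ /(_ c13) e41] := lt_cons _ _ _ lt41 lt13 (etrans (e_sym v4 v3) e34).
  by rewrite e_sym.
Qed.

End ConsistentOrder.

Lemma inj_ltn_total (T : eqType) (pos : T -> nat) :
  injective pos -> forall x y, x != y -> (pos x < pos y) || (pos y < pos x).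
Proof.
move=> pos_inj x y /(contra_neq (@pos_inj x y)).
by rewrite neq_ltn.
Qed.

Lemma acyclic_path4_no_chord (T : finType) (e : rel T) (v1 v2 v3 v4 : T) :
  (forall x p, ~~ is_cycle e x p) -> irreflexive e ->
  e v1 v2 -> e v2 v3 -> e v3 v4 ->
  v1 != v3 -> v2 != v4 -> v1 != v4 -> ~~ e v4 v1.
Proof.
move=> acyclic e_irr e12 e23 e34 n13 n24 n14.
have edge_neq x y : e x y -> x != y.
  by apply: contraTneq => ->; rewrite e_irr.
apply: contraT => /negbNE e41; have := acyclic v1 [:: v2; v3; v4].
rewrite /is_cycle /= e12 e23 e34 e41 !inE !negb_or n13 n14 n24 /=.
by rewrite (edge_neq _ _ e12) (edge_neq _ _ e23) (edge_neq _ _ e34).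
Qed.

Theorem propositionA12 (T : finType) (e : rel T)
  (Htree : is_tree e) (Hpthin : pthin_eq e 2)
  (pos : T -> nat) (cls : T -> 'I_2)
  (Hpos : injective pos) (Hsc : strongly_consistent e pos cls)
  (v1 v2 v3 v4 : T)
  (e12 : e v1 v2) (e23 : e v2 v3) (e34 : e v3 v4)
  (c13 : cls v1 = cls v3) (c24 : cls v2 = cls v4) (c12 : cls v1 != cls v2) :
  ~ (pos v1 < pos v3 /\ pos v4 < pos v2) /\
  ~ (pos v3 < pos v1 /\ pos v2 < pos v4).
Proof.
have [[e_sym e_irr] _ _ acyclic] := Htree.
have n14 : v1 != v4 by apply: contra_neq c12 => ->.
have ltn_neq x y : pos x < pos y -> x != y.
  by apply: contraTneq => ->; rewrite ltnn.
have no_chord : v1 != v3 -> v2 != v4 -> ~~ e v1 v4.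
  by move=> n13 n24; rewrite e_sym (acyclic_path4_no_chord acyclic e_irr e12 e23 e34).
rewrite strongly_consistentE in Hsc.
have total := inj_ltn_total Hpos.
have total_conv x y (nxy : x != y) : (pos y < pos x) || (pos x < pos y).
  by rewrite orbC total.
split=> [[lt13 lt42] | [lt31 lt24]].
- have n24 : v2 != v4 by rewrite eq_sym ltn_neq.
  have /negP := no_chord (ltn_neq _ _ lt13) n24; apply.
  exact: alternating_crossing_chord Hsc total e12 e34 c13 c24 n14 lt13 lt42.
- have n13 : v1 != v3 by rewrite eq_sym ltn_neq.
  have /negP := no_chord n13 (ltn_neq _ _ lt24); apply.
  exact: alternating_crossing_chord (consistent_order_converse e_sym Hsc)
    total_conv e12 e34 c13 c24 n14 lt31 lt24.
Qed.
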